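(* Let $X\subset\mathbb{R}^n$ be a closed set which is the closure of its interior, $f:X\to\mathbb{R}^n$ locally Lipschitz, and suppose $\dot x=f(x)$ is forward complete with flow $\varphi_t$. Let $K$ be a closed convex cone with nonempty interior and suppose the system is strongly monotone: $\xi_1\succ\xi_2$ implies $\varphi_t(\xi_1)\gg\varphi_t(\xi_2)$ for all $t>0$, $\xi_1,\xi_2\in X$. Let $v\in\operatorname{int}(K)$, $|v|=1$, with $X$ invariant under translation by $v$ and $\varphi_t(\xi+\lambda v)=\varphi_t(\xi)+\lambda v$ for all $\lambda\in\mathbb{R}$, $\xi\in X$, $t\ge0$. Let $V(x)=\inf\{\alpha\in\mathbb{R}:x\preceq\alpha v\}$. Then for all $\xi_1,\xi_2\in X$ and all $t>0$, $$V(\varphi_t(\xi_1)-\varphi_t(\xi_2))\le V(\xi_1-\xi_2),$$ and the inequality is strict whenever $\xi_1-\xi_2\notin\operatorname{span}\{v\}$.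
   Context: The cone $K$ satisfies $K+K\subset K$, $\alpha K\subset K$ for $\alpha\ge0$, $K\cap(-K)=\{0\}$. $\xi_1\succeq\xi_2$ iff $\xi_1-\xi_2\in K$; $\xi_1\succ\xi_2$ iff additionally $\xi_1\neq\xi_2$; $\xi_1\gg\xi_2$ iff $\xi_1-\xi_2\in\operatorname{int}(K)$. Forward complete means every solution is uniquely defined in $X$ on an interval containing $[0,\infty)$ in its interior. *)

From HB Require Import structures.
From mathcomp Require Import all_boot all_order all_algebra.
From mathcomp Require Import all_classical all_reals all_analysis.
Set Implicit Arguments. Unset Strict Implicit. Unset Printing Implicit Defensive.
Import Order.TTheory GRing.Theory Num.Theory.
Import numFieldNormedType.Exports.
Local Open Scope classical_set_scope.
Local Open Scope ring_scope.

Section Defs.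
Context {R : realType} {n : nat}.
Notation V := 'rV[R]_n.

Definition euclid_norm (x : V) : R := Num.sqrt (\sum_(i < n) x ord0 i ^+ 2).

Definition is_cone (K : set V) : Prop :=
  [/\ forall x y, K x -> K y -> K (x + y),
      forall (a : R) x, 0 <= a -> K x -> K (a *: x)
    & forall x, K x -> K (- x) -> x = 0].

Definition cle (K : set V) (x y : V) : Prop := K (y - x).
Definition clt (K : set V) (x y : V) : Prop := K (y - x) /\ x <> y.
Definition cllt (K : set V) (x y : V) : Prop := interior K (y - x).

Definition locally_lipschitz_on (X : set V) (f : V -> V) : Prop :=
  forall xi, X xi -> exists2 U : set V, nbhs xi U &
    exists L : R, forall x y, U x -> X x -> U y -> X y ->
      `|f x - f y| <= L * `|x - y|.

Definition is_solution (X : set V) (f : V -> V) (a b : \bar R) (x : R -> V) : Prop :=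
  forall t : R, (a < t%:E)%E -> (t%:E < b)%E ->
    X (x t) /\ derivable x t 1 /\ 'D_1 x t = f (x t).

(* forward completeness, with phi the associated (forward) flow:
   for every initial condition xi in X there is a solution defined in X on an
   interval (a, +oo) with a < 0 (an interval containing [0,+oo) in its
   interior), every solution on an open interval containing 0 with initial
   condition xi coincides with it (uniqueness), and phi t xi is its value at
   time t >= 0. *)
Definition forward_complete_flow (X : set V) (f : V -> V) (phi : R -> V -> V) : Prop :=
  forall xi, X xi -> exists a : R, a < 0 /\ exists x : R -> V,
    [/\ x 0 = xi, is_solution X f a%:E +oo%E x,
        (forall (b c : \bar R) (y : R -> V), (b < 0%:E)%E -> (0%:E < c)%E ->
            y 0 = xi -> is_solution X f b c y ->
            forall t : R, (b < t%:E)%E -> (t%:E < c)%E -> a < t -> y t = x t)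
      & forall t, 0 <= t -> phi t xi = x t].

Definition strongly_monotone (X : set V) (K : set V) (phi : R -> V -> V) : Prop :=
  forall xi1 xi2, X xi1 -> X xi2 -> clt K xi2 xi1 ->
    forall t, 0 < t -> cllt K (phi t xi2) (phi t xi1).

Definition Vfun (K : set V) (v : V) (x : V) : R :=
  inf [set alpha : R | cle K x (alpha *: v)].

End Defs.

From HB Require Import structures.
From mathcomp Require Import all_boot all_order all_algebra.
From mathcomp Require Import all_classical all_reals all_analysis.
From mathcomp Require Import lra.
Import Order.TTheory GRing.Theory Num.Theory.
Import numFieldNormedType.Exports.
Local Open Scope classical_set_scope.
Local Open Scope ring_scope.

(* Since K is closed and pointed and v is interior to K, the infimum defining
   V(x) is a minimum: x ⪯ V(x) v.  Put a = V(ξ1 - ξ2), so ξ1 ⪯ ξ2 + a v.  The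
   flow commutes with translation along v, hence φ_t(ξ2 + a v) = φ_t(ξ2) + a v.
   If ξ1 = ξ2 + a v this gives φ_t(ξ1) - φ_t(ξ2) = a v; otherwise strong
   monotonicity gives φ_t(ξ1) ≪ φ_t(ξ2) + a v, and an interior gap lets a be
   lowered a little, so V(φ_t(ξ1) - φ_t(ξ2)) < a. *)

Lemma nbhs_ray {R : realFieldType} {V : normedModType R} {A : set V} {p : V} (x : V) :
  nbhs p A -> exists2 r : R, 0 < r & forall c, 0 < c <= r -> A (p - c *: x).
Proof.
move=> /nbhs_normP [e e0 Ae].
have x1_gt0 : 0 < `|x| + 1 by rewrite ltr_wpDl.
exists (e / (`|x| + 1)) => [|c /andP[c0 cr]]; first by rewrite divr_gt0.
apply: Ae => /=; rewrite opprB addrC subrK normrZ gtr0_norm //.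
have : c * (`|x| + 1) <= e by rewrite -ler_pdivlMr.
have : 0 <= `|x| by [].
nra.
Qed.

Section VfunTheory.
Context {R : realType} {n : nat} {K : set 'rV[R]_n} {v : 'rV[R]_n}.
Hypotheses (coneK : is_cone K) (closedK : closed K) (vK : interior K v).
Hypothesis v_neq0 : v != 0.
Implicit Types (x y : 'rV[R]_n) (a : R).

Local Notation Vset x := [set a : R | cle K x (a *: v)].

Lemma scalev_in_cone a : 0 <= a -> K (a *: v).
Proof. by case: coneK => _ Kscale _ a_ge0; apply: Kscale => //; exact: nbhs_singleton. Qed.

Lemma cle_refl x : cle K x x.
Proof. by rewrite /cle subrr -(scale0r v); exact: scalev_in_cone. Qed.

Lemma Vset_nonempty x : Vset x !=set0.
Proof.
case: coneK => _ Kscale _.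
have [r r_gt0 Kray] := nbhs_ray x vK.
exists r^-1; rewrite /= /cle.
have -> : r^-1 *: v - x = r^-1 *: (v - r *: x).
  by rewrite scalerBr scalerA mulVf ?gt_eqF // scale1r.
by apply: Kscale; [rewrite invr_ge0 ltW | apply: Kray; rewrite r_gt0 lexx].
Qed.

Lemma Vset_lbound x : has_lbound (Vset x).
Proof.
case: coneK => _ Kscale Kpointed.
have notK_Nv : (~` K) (- v).
  by move=> KNv; move/eqP: v_neq0; apply; apply: Kpointed => //; exact: nbhs_singleton.
have : nbhs (- v) (~` K) by move: closedK; rewrite -openC openE; apply.
move=> /(nbhs_ray x) [r r_gt0 notK_ray].
exists (- r^-1) => a Ka; rewrite leNgt; apply/negP => a_lt.
have r_inv_lt : r^-1 < - a by rewrite ltrNr.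
have Na_gt0 : 0 < - a by apply: lt_trans r_inv_lt; rewrite invr_gt0.
apply: (notK_ray (- a)^-1).
  by rewrite invr_gt0 Na_gt0 /= -[r]invrK ltW // ltf_pV2 // posrE invr_gt0.
have -> : - v - (- a)^-1 *: x = (- a)^-1 *: (a *: v - x).
  by rewrite scalerBr scalerA invrN mulNr mulVf ?scaleNr ?scale1r // -oppr_eq0 gt_eqF.
by apply: Kscale; rewrite // invr_ge0 ltW.
Qed.

Lemma Vset_closed x : closed (Vset x).
Proof.
apply: (preimage_closed (f := fun a : R => a *: v - x)) => // a _.
by apply: cvgB; [exact: scalel_continuous | exact: cvg_cst].
Qed.

Lemma cle_Vfun x : cle K x (Vfun K v x *: v).
Proof.
apply: (itv_closed_infimums (Vset_nonempty x) (Vset_closed x)); split.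
  exact: ge_inf (Vset_lbound x).
by move=> b; apply: lb_le_inf (Vset_nonempty x).
Qed.

Lemma Vfun_le x a : cle K x (a *: v) -> Vfun K v x <= a.
Proof. by move=> x_le; exact: ge_inf (Vset_lbound x) _ x_le. Qed.

Lemma Vfun_lt x a : cllt K x (a *: v) -> Vfun K v x < a.
Proof.
move=> /(nbhs_ray v) [r r_gt0 Kray].
apply: (le_lt_trans (@Vfun_le x (a - r) _)); last by rewrite ltrBlDr ltrDl.
by rewrite /cle scalerBl addrAC; apply: Kray; rewrite r_gt0 lexx.
Qed.

Lemma cle_subl x y z : cle K (x - y) z <-> cle K x (y + z).
Proof. by rewrite /cle opprB addrCA addrA. Qed.

Lemma cllt_subl x y z : cllt K (x - y) z <-> cllt K x (y + z).
Proof. by rewrite /cllt opprB addrCA addrA. Qed.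

Context {Y : set 'rV[R]_n} {g : 'rV[R]_n -> 'rV[R]_n}.
Hypothesis Y_translate : forall x a, Y x -> Y (x + a *: v).
Hypothesis g_translate : forall x a, Y x -> g (x + a *: v) = g x + a *: v.
Hypothesis g_strongly_monotone :
  forall x y, Y x -> Y y -> clt K y x -> cllt K (g y) (g x).

Lemma Vfun_map_lt_bound x y a : Y x -> Y y -> cle K (x - y) (a *: v) ->
  x <> y + a *: v -> Vfun K v (g x - g y) < a.
Proof.
move=> Yx Yy /cle_subl x_le x_neq; apply/Vfun_lt/cllt_subl.
rewrite -g_translate //.
by apply: g_strongly_monotone; [exact: Y_translate | | split].
Qed.

Lemma Vfun_map_le x y : Y x -> Y y -> Vfun K v (g x - g y) <= Vfun K v (x - y).
Proof.
move=> Yx Yy; set a := Vfun K v (x - y).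
have [x_eq|x_neq] := pselect (x = y + a *: v); last first.
  exact/ltW/Vfun_map_lt_bound/x_neq/cle_Vfun.
rewrite x_eq g_translate // addrAC subrr add0r.
by apply: Vfun_le; exact: cle_refl.
Qed.

Lemma Vfun_map_lt x y : Y x -> Y y ->
  ~ (exists c : R, x - y = c *: v) ->
  Vfun K v (g x - g y) < Vfun K v (x - y).
Proof.
move=> Yx Yy notin_span; apply: Vfun_map_lt_bound (cle_Vfun _) _ => // x_eq.
by apply: notin_span; exists (Vfun K v (x - y)); rewrite {1}x_eq addrAC subrr add0r.
Qed.

End VfunTheory.

Lemma euclid_norm0 (R : realType) (n : nat) : euclid_norm (0 : 'rV[R]_n) = 0.
Proof. by rewrite /euclid_norm big1 ?sqrtr0 // => i _; rewrite mxE expr0n. Qed.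

Theorem lemma3 (R : realType) (n : nat) (X : set 'rV[R]_n)
  (f : 'rV[R]_n -> 'rV[R]_n) (phi : R -> 'rV[R]_n -> 'rV[R]_n)
  (K : set 'rV[R]_n) (v : 'rV[R]_n) :
  closed X -> closure (interior X) = X ->
  locally_lipschitz_on X f ->
  forward_complete_flow X f phi ->
  is_cone K -> convex_set K -> closed K -> interior K !=set0 ->
  strongly_monotone X K phi ->
  interior K v -> euclid_norm v = 1 ->
  (forall xi (lambda : R), X xi -> X (xi + lambda *: v)) ->
  (forall xi (lambda t : R), X xi -> 0 <= t ->
     phi t (xi + lambda *: v) = phi t xi + lambda *: v) ->
  forall xi1 xi2, X xi1 -> X xi2 -> forall t : R, 0 < t ->
    Vfun K v (phi t xi1 - phi t xi2) <= Vfun K v (xi1 - xi2) /\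
    (~ (exists c : R, xi1 - xi2 = c *: v) ->
       Vfun K v (phi t xi1 - phi t xi2) < Vfun K v (xi1 - xi2)).
Proof.
move=> _ _ _ _ coneK _ closedK _ mono vK v_norm1 X_translate phi_translate.
move=> xi1 xi2 X1 X2 t t_gt0.
have v_neq0 : v != 0.
  by apply/eqP => v0; move: v_norm1; rewrite v0 euclid_norm0 => /eqP; rewrite eq_sym oner_eq0.
have phit_translate xi a : X xi -> phi t (xi + a *: v) = phi t xi + a *: v.
  by move=> Xxi; apply: phi_translate; rewrite // ltW.
have phit_mono xi xi' : X xi -> X xi' -> clt K xi' xi ->
    cllt K (phi t xi') (phi t xi).
  by move=> Xxi Xxi' lt; apply: mono.
have phit_le := Vfun_map_le coneK closedK vK v_neq0 X_translate phit_translate phit_mono.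
have phit_lt := Vfun_map_lt coneK closedK vK v_neq0 X_translate phit_translate phit_mono.
by split; [exact: phit_le | exact: phit_lt].
Qed.
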